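(* Let $G$ be a compact Abelian group with a continuous length function $l$, and let $(H_n)_{n\in\mathbb{N}}$ be closed subgroups of $G$ converging to $G$ for the Hausdorff distance of $d_l(g,g')=l(g^{-1}g')$. For each $n$ let $J_n\subseteq\widehat G$ be the annihilator of $H_n$ and $q_n:\widehat G\to\widehat{H_n}=\widehat G/J_n$ the canonical surjection. Let $F$ be a finite subset of $\widehat G$. Then there exists $N\in\mathbb{N}$ such that for all $n\ge N$, $q_n$ is injective on $F$.
   Context: A length function: $l\ge0$, $l(g)=0$ iff $g$ is the unit, symmetric, subadditive. *)

From HB Require Import structures.
From mathcomp Require Import all_boot all_order all_algebra.
From mathcomp Require Import all_classical all_reals all_analysis.
From mathcomp Require Import complex.
Set Implicit Arguments. Unset Strict Implicit. Unset Printing Implicit Defensive.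
Import Order.TTheory GRing.Theory Num.Theory numFieldNormedType.Exports.
Local Open Scope classical_set_scope.
Local Open Scope ring_scope.

(* Compact abelian groups are written additively: G : topologicalZmodType,
   unit 0, g^{-1} g' is written g' - g. *)

Definition is_length (R : realType) (G : zmodType) (l : G -> R) : Prop :=
  [/\ (forall g, 0 <= l g),
      (forall g, l g = 0 <-> g = 0),
      (forall g, l (- g) = l g) &
      (forall g h, l (g + h) <= l g + l h)].

Definition dist_of_length (R : realType) (G : zmodType) (l : G -> R) (g g' : G) : R :=
  l (g' - g).

Definition hausdorff_dist (R : realType) (T : Type) (d : T -> T -> R)
    (A B : set T) : \bar R :=
  Order.max
    (ereal_sup [set ereal_inf [set (d a b)%:E | b in B] | a in A])
    (ereal_sup [set ereal_inf [set (d a b)%:E | a in A] | b in B]).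

Definition closed_subgroup (G : topologicalZmodType) (H : set G) : Prop :=
  [/\ closed H, H 0 & (forall x y, H x -> H y -> H (x - y))].

(* Continuity into C is expressed through
   continuity of the real and imaginary parts (product topology on C = R^2). *)
Definition is_character (R : realType) (G : topologicalZmodType)
    (chi : G -> R[i]) : Prop :=
  [/\ (forall g, `|chi g| = 1),
      (forall g h, chi (g + h) = chi g * chi h),
      continuous ((fun g => complex.Re (chi g)) : G -> R) &
      continuous ((fun g => complex.Im (chi g)) : G -> R)].

Definition dual_group (R : realType) (G : topologicalZmodType) : set (G -> R[i]) :=
  [set chi | is_character chi].

Definition annihilator (R : realType) (G : topologicalZmodType) (H : set G)
    : set (G -> R[i]) :=
  [set chi | is_character chi /\ (forall h, H h -> chi h = 1)].

Definition char_div (R : realType) (G : Type) (chi psi : G -> R[i]) : G -> R[i] :=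
  fun g => chi g * (psi g)^-1.

(* q : \hat G -> \hat G / J is the canonical surjection; q chi = q psi iff
   chi psi^{-1} \in J.  "q is injective on F". *)
Definition quotient_injective_on (R : realType) (G : Type)
    (J : set (G -> R[i])) (F : set (G -> R[i])) : Prop :=
  forall chi psi, F chi -> F psi -> J (char_div chi psi) -> chi = psi.

From HB Require Import structures.
From mathcomp Require Import all_boot all_order all_algebra.
From mathcomp Require Import all_classical all_reals all_analysis.
From mathcomp Require Import complex.
Set Implicit Arguments. Unset Strict Implicit. Unset Printing Implicit Defensive.
Import Order.TTheory GRing.Theory Num.Theory numFieldNormedType.Exports.
Local Open Scope classical_set_scope.
Local Open Scope ring_scope.

(* If chi <> psi, pick g with chi g <> psi g.  By compactness of G there is
   d > 0 such that |chi x - psi x| < |chi g - psi g| whenever l x < d.  Once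
   the Hausdorff distance from H_n to G is below d, some h in H_n satisfies
   l (g - h) < d.  If chi psi^{-1} annihilated H_n, then chi h = psi h, and
   multiplicativity together with |chi h| = 1 would give
   |chi (g - h) - psi (g - h)| = |chi g - psi g|, a contradiction.  Finitely
   many pairs of F then yield a common threshold N. *)

Lemma compact_uniform_lt (R : realType) (T : topologicalType) (l f : T -> R)
    (c : R) :
  compact [set: T] -> continuous l -> continuous f -> (forall x, 0 <= l x) ->
  (forall x, l x = 0 -> f x < c) ->
  exists2 d : R, 0 < d & forall x, l x < d -> f x < c.
Proof.
move=> cptT lc fc l_ge0 fc_zero.
pose K := f @^-1` [set y | c <= y].
have cptK : compact K.
  apply: subclosed_compact cptT _ => //.
  by apply: preimage_closed => //; apply: closed_ge.
have clK : closed (l @` K).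
  apply: compact_closed; first exact: Rhausdorff.
  by apply: continuous_compact => //; apply: continuous_subspaceT.
have notK0 : (~` (l @` K)) 0.
  by move=> [x /= cfx /fc_zero]; rewrite ltNge cfx.
have /nbhs_ballP [d d_gt0 ballK] : nbhs (0 : R) (~` (l @` K)).
  by apply: open_nbhs_nbhs; split => //; apply: closed_openC.
exists d => // x lxd; rewrite ltNge; apply/negP => Kx.
by apply: (ballK (l x)); [rewrite /ball /= sub0r normrN ger0_norm | exists x].
Qed.

Lemma hausdorff_distT_lt (R : realType) (T : Type) (d : T -> T -> R)
    (A : set T) (e : R) (g : T) :
  (hausdorff_dist d A [set: T] < e%:E)%E -> exists2 a, A a & d a g < e.
Proof.
move=> Ae; have : (ereal_inf [set (d a g)%:E | a in A] < e%:E)%E.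
  apply: le_lt_trans Ae; rewrite /hausdorff_dist le_max; apply/orP; right.
  by apply: ereal_sup_ubound; exists g.
by case/ereal_inf_lt => _ [a Aa <-]; rewrite lte_fin; exists a.
Qed.

Lemma near_finite_set_forall (I : choiceType) (T : Type) (F : set_system T)
    (A : set I) (P : I -> T -> Prop) :
  Filter F -> finite_set A -> (forall i, A i -> \forall t \near F, P i t) ->
  \forall t \near F, forall i, A i -> P i t.
Proof.
move=> FF /finite_fsetP [D ->] AP.
by apply: filterS (filter_bigI (f := P) FF AP) => t DP i /DP.
Qed.

Section Characters.
Variables (R : realType) (G : topologicalZmodType).
Implicit Types (chi psi : G -> R[i]) (x a g : G).

Lemma character_neq0 chi x : is_character chi -> chi x != 0.
Proof.
case=> chi1 _ _ _; apply/eqP => chix0.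
by move: (chi1 x); rewrite chix0 normr0 => /esym/eqP; rewrite oner_eq0.
Qed.

Lemma character0 chi : is_character chi -> chi 0 = 1.
Proof.
move=> chiC; have [_ chiD _ _] := chiC.
by apply: (mulfI (character_neq0 0 chiC)); rewrite mulr1 -chiD addr0.
Qed.

Lemma annihilator_char_div chi psi (H : set G) a :
  is_character psi -> annihilator H (char_div chi psi) -> H a -> chi a = psi a.
Proof.
move=> psiC [_ annH] Ha; have := annH a Ha; rewrite /char_div.
by move/(canRL (divfK (character_neq0 a psiC))); rewrite mul1r.
Qed.

(* The real-valued squared modulus |chi x - psi x|^2, written in coordinates
   so that its continuity follows from that of Re and Im. *)
Definition char_gap chi psi x : R :=
  (complex.Re (chi x) - complex.Re (psi x)) ^+ 2 +
  (complex.Im (chi x) - complex.Im (psi x)) ^+ 2.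

Lemma char_gapE chi psi x : (char_gap chi psi x)%:C%C = `|chi x - psi x| ^+ 2.
Proof.
by rewrite -add_Re2_Im2 /char_gap; case: (chi x) => ? ?; case: (psi x).
Qed.

Lemma char_gap_eq0 chi psi x : (char_gap chi psi x == 0) = (chi x == psi x).
Proof.
apply/eqP/eqP => [gap0|chipsi_x]; last first.
  by rewrite /char_gap chipsi_x !subrr expr0n addr0.
by apply/eqP; rewrite -subr_eq0 -normr_eq0 -sqrf_eq0 -char_gapE gap0.
Qed.

Lemma char_gap_gt0 chi psi x : chi x != psi x -> 0 < char_gap chi psi x.
Proof.
by rewrite lt_def char_gap_eq0 addr_ge0 ?sqr_ge0 // => ->.
Qed.

Lemma continuous_char_gap chi psi :
  is_character chi -> is_character psi -> continuous (char_gap chi psi).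
Proof.
case=> _ _ chiRe chiIm [_ _ psiRe psiIm] x.
apply: cvgD; apply: cvgM; apply: cvgB;
  by [apply: chiRe | apply: psiRe | apply: chiIm | apply: psiIm].
Qed.

Lemma char_gapDr chi psi a x :
  is_character chi -> is_character psi -> chi a = psi a ->
  char_gap chi psi (x + a) = char_gap chi psi x.
Proof.
move=> [chi1 chiD _ _] [_ psiD _ _] chipsi_a.
apply: (@complexI R); rewrite !char_gapE chiD psiD -chipsi_a -mulrBl.
by rewrite normrM chi1 mulr1.
Qed.

Lemma near_not_annihilator_char_div (l : G -> R) (H : nat -> set G) chi psi :
  compact [set: G] -> is_length l -> continuous l ->
  (fun n => hausdorff_dist (dist_of_length l) (H n) [set: G]) @ \oo --> 0%E ->
  is_character chi -> is_character psi -> chi <> psi ->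
  \forall n \near \oo, ~ annihilator (H n) (char_div chi psi).
Proof.
move=> cptG [l_ge0 l0 _ _] lc hausH chiC psiC chi_neq_psi.
have [g /eqP chipsi_g] : exists g, chi g <> psi g.
  by apply/existsNP => eq_chipsi; apply/chi_neq_psi/funext.
have [d d_gt0 gap_lt] : exists2 d : R, 0 < d &
    forall x, l x < d -> char_gap chi psi x < char_gap chi psi g.
  apply: compact_uniform_lt => //; first exact: continuous_char_gap.
  move=> x /l0 ->; have /eqP -> : char_gap chi psi 0 == 0.
    by rewrite char_gap_eq0 !character0.
  exact: char_gap_gt0.
have : \forall n \near \oo,
    (hausdorff_dist (dist_of_length l) (H n) [set: G] < d%:E)%E.
  apply: (hausH (fun y => y < d%:E)%E).
  by apply: open_ereal_lt'; rewrite lte_fin.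
apply: filterS => n /(hausdorff_distT_lt g) [a Ha la] annH.
have chipsi_a := annihilator_char_div psiC annH Ha.
have := gap_lt _ la.
by rewrite -(char_gapDr (g - a) chiC psiC chipsi_a) subrK ltxx.
Qed.

End Characters.

Theorem mainTheorem10 (R : realType) (G : topologicalZmodType) (l : G -> R)
  (H : nat -> set G) (F : set (G -> R[i])) :
  compact [set: G] ->
  is_length l -> continuous l ->
  (forall n, closed_subgroup (H n)) ->
  (fun n => hausdorff_dist (dist_of_length l) (H n) [set: G]) @ \oo --> 0%E ->
  F `<=` @dual_group R G -> finite_set F ->
  exists N : nat, forall n : nat, (N <= n)%N ->
    quotient_injective_on (@annihilator R G (H n)) F.
Proof.
move=> cptG ll lc _ hausH FG finF.
have : \forall n \near \oo, forall p, (F `*` F) p ->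
    p.1 = p.2 \/ ~ annihilator (H n) (char_div p.1 p.2).
  apply: near_finite_set_forall; first exact: finite_setX.
  move=> [chi psi] [/= Fchi Fpsi].
  have [->|chi_neq_psi] := pselect (chi = psi); first by apply: nearW; left.
  have chiC : is_character chi := FG _ Fchi.
  have psiC : is_character psi := FG _ Fpsi.
  apply: filterS (near_not_annihilator_char_div cptG ll lc hausH chiC psiC
    chi_neq_psi) => n; exact: or_intror.
case=> N _ sepN; exists N => n Nn chi psi Fchi Fpsi annH.
by case: (sepN n Nn (chi, psi)).
Qed.
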